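(* Let $f_1,\dots,f_m:\mathbb R^n\to\mathbb R$ be continuously differentiable with $\nabla f_j$ being $L_j$-Lipschitz, and set $L=\max_j L_j$. Let $\tau>0$, $x,y\in\mathbb R^n$, and let $$\lambda_\tau(x,y)\in\operatorname*{argmin}_{\lambda\in\Delta_m}\Big\{\langle\lambda,F(x)-F(y)\rangle+\frac{\tau}{2}\|DF(y)\lambda\|^2\Big\}$$ be any minimizer. Then $$\Big\|DF(y)\lambda_\tau(x,y)-\mathrm{proj}_{C(y)}\Big(\frac{y-x}{\tau}\Big)\Big\|\le\sqrt{\frac{2L}{\tau}}\,\|x-y\|.$$
   Context: $F=(f_1,\dots,f_m)^\top$. $\Delta_m=\{\lambda\in\mathbb R^m_{\ge0}:\sum_j\lambda_j=1\}$ is the unit simplex. $DF(y)=[\nabla f_1(y),\dots,\nabla f_m(y)]\in\mathbb R^{n\times m}$, so $DF(y)\lambda=\sum_j\lambda_j\nabla f_j(y)$. $C(y)=\mathrm{conv}\{\nabla f_1(y),\dots,\nabla f_m(y)\}$, and $\mathrm{proj}_C(v)$ is the Euclidean projection of $v$ onto the closed convex set $C$. *)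

From HB Require Import structures.
From mathcomp Require Import all_boot all_order all_algebra.
From mathcomp Require Import all_classical all_reals all_analysis.
Set Implicit Arguments. Unset Strict Implicit. Unset Printing Implicit Defensive.
Import Order.TTheory GRing.Theory Num.Theory.
Import numFieldNormedType.Exports.
Local Open Scope classical_set_scope.
Local Open Scope ring_scope.

Section Defs.
Variable R : realType.

(* Euclidean inner product and Euclidean norm (the library norm on 'rV is
   the sup norm, so we define the Euclidean one explicitly). *)
Definition dotv n (u v : 'rV[R]_n) : R := \sum_(i < n) u 0 i * v 0 i.
Definition enorm n (u : 'rV[R]_n) : R := Num.sqrt (dotv u u).

Definition grad n (f : 'rV[R]_n -> R) (x : 'rV[R]_n) : 'rV[R]_n :=
  \row_(i < n) ('d f x (delta_mx 0 i : 'rV[R]_n)).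

Definition C1 n (f : 'rV[R]_n -> R) : Prop :=
  (forall x, differentiable f x) /\ continuous (grad f).

Definition lipschitz_e n (g : 'rV[R]_n -> 'rV[R]_n) (L : R) : Prop :=
  forall a b, enorm (g a - g b) <= L * enorm (a - b).

Definition simplex m : set 'rV[R]_m :=
  [set l | (forall j, 0 <= l 0 j) /\ \sum_(j < m) l 0 j = 1].

Definition Fvec m n (f : 'I_m -> 'rV[R]_n -> R) (x : 'rV[R]_n) : 'rV[R]_m :=
  \row_(j < m) f j x.

Definition DFmul m n (f : 'I_m -> 'rV[R]_n -> R) (y : 'rV[R]_n)
  (l : 'rV[R]_m) : 'rV[R]_n := \sum_(j < m) l 0 j *: grad (f j) y.

Definition Cset m n (f : 'I_m -> 'rV[R]_n -> R) (y : 'rV[R]_n) : set 'rV[R]_n :=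
  [set v | exists2 l, simplex l & v = \sum_(j < m) l 0 j *: grad (f j) y].

(* p = proj_C(v): Euclidean nearest point of C to v (unique when C is
   nonempty closed convex). *)
Definition is_proj n (C : set 'rV[R]_n) (v p : 'rV[R]_n) : Prop :=
  C p /\ forall q, C q -> enorm (v - p) <= enorm (v - q).

Definition obj m n (f : 'I_m -> 'rV[R]_n -> R) (tau : R) (x y : 'rV[R]_n)
  (l : 'rV[R]_m) : R :=
  dotv l (Fvec f x - Fvec f y) + tau / 2 * (enorm (DFmul f y l)) ^+ 2.

Definition is_argmin_simplex m (phi : 'rV[R]_m -> R) (l : 'rV[R]_m) : Prop :=
  simplex l /\ forall l', simplex l' -> phi l <= phi l'.

End Defs.

From HB Require Import structures.
From mathcomp Require Import all_boot all_order all_algebra.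
From mathcomp Require Import all_classical all_reals all_analysis.
From mathcomp Require Import ring lra.
Set Implicit Arguments.
Unset Strict Implicit.
Unset Printing Implicit Defensive.

Import Order.TTheory GRing.Theory Num.Theory.
Import numFieldNormedType.Exports.
Local Open Scope classical_set_scope.
Local Open Scope ring_scope.

(* Write [g = DF(y) lambda] and [p = DF(y) mu], [d = x - y].  Every [f_j]
   differs from its linearisation at [y] by at most [L/2 |d|^2] (descent
   lemma), so up to an error of [L/2 |d|^2] the objective is
   [<DF(y) nu, d> + tau/2 |DF(y) nu|^2].  Comparing the values at the
   minimiser [lambda] and at [mu] gives
   [<g - p, d> + tau/2 (|g|^2 - |p|^2) <= L |d|^2], while the obtuse-angle
   characterisation of the projection [p] of [-d/tau] onto the convex set
   [C(y)], tested at [g], gives [-<g - p, d> <= tau <p, g - p>].  Adding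
   the two yields [tau/2 |g - p|^2 <= L |d|^2]. *)

Section Euclid.
Variables (R : realType) (n : nat).
Implicit Types u v w : 'rV[R]_n.

Lemma dotvC u v : dotv u v = dotv v u.
Proof. by apply: eq_bigr => i _; rewrite mulrC. Qed.

Lemma dotvDl u v w : dotv (u + v) w = dotv u w + dotv v w.
Proof. by rewrite /dotv -big_split; apply: eq_bigr => i _; rewrite !mxE mulrDl. Qed.

Lemma dotvZl (c : R) u w : dotv (c *: u) w = c * dotv u w.
Proof. by rewrite /dotv mulr_sumr; apply: eq_bigr => i _; rewrite !mxE mulrA. Qed.

Lemma dotvNl u w : dotv (- u) w = - dotv u w.
Proof. by rewrite -scaleN1r dotvZl mulN1r. Qed.

Lemma dotvBl u v w : dotv (u - v) w = dotv u w - dotv v w.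
Proof. by rewrite dotvDl dotvNl. Qed.

Lemma dotvZr (c : R) u w : dotv w (c *: u) = c * dotv w u.
Proof. by rewrite dotvC dotvZl dotvC. Qed.

Lemma dotvBr u v w : dotv w (u - v) = dotv w u - dotv w v.
Proof. by rewrite dotvC dotvBl !(dotvC w). Qed.

Lemma dotv0r u : dotv u 0 = 0.
Proof. by rewrite /dotv big1 // => i _; rewrite mxE mulr0. Qed.

Lemma dotv_suml m (F : 'I_m -> 'rV[R]_n) w :
  dotv (\sum_(j < m) F j) w = \sum_(j < m) dotv (F j) w.
Proof.
elim/big_ind2: _ => [|a b c d <- <-|//]; last by rewrite dotvDl.
by rewrite /dotv big1 // => i _; rewrite mxE mul0r.
Qed.

Lemma dotv_ge0 u : 0 <= dotv u u.
Proof. by apply: sumr_ge0 => i _; rewrite -expr2 sqr_ge0. Qed.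

Lemma dotv_eq0 u : dotv u u = 0 -> u = 0.
Proof.
move=> /eqP; rewrite psumr_eq0 => [/allP u0|i _]; last by rewrite -expr2 sqr_ge0.
apply/rowP => i; have /implyP := u0 i (mem_index_enum _).
by rewrite mxE -expr2 sqrf_eq0 => /(_ isT)/eqP.
Qed.

Lemma dotv_sqrB u v (t : R) :
  dotv (u - t *: v) (u - t *: v) = dotv u u - (t + t) * dotv u v + t ^+ 2 * dotv v v.
Proof. by rewrite !(dotvBl, dotvBr, dotvZl, dotvZr) (dotvC v u); ring. Qed.

Lemma enorm_ge0 u : 0 <= enorm u.
Proof. exact: sqrtr_ge0. Qed.

Lemma enorm_sqr u : enorm u ^+ 2 = dotv u u.
Proof. by rewrite sqr_sqrtr // dotv_ge0. Qed.

Lemma enormZ (c : R) u : enorm (c *: u) = `|c| * enorm u.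
Proof. by rewrite /enorm dotvZl dotvZr mulrA -expr2 sqrtrM ?sqr_ge0 // sqrtr_sqr. Qed.

Lemma enormN u : enorm (- u) = enorm u.
Proof. by rewrite -scaleN1r enormZ normrN1 mul1r. Qed.

(* Expand [0 <= |b u - a w|^2] with [a = |u|], [b = |w|]. *)
Lemma cauchy_schwarz u w : dotv u w <= enorm u * enorm w.
Proof.
have [/dotv_eq0 ->|u0] := eqVneq (dotv u u) 0.
  by rewrite dotvC dotv0r mulr_ge0 // enorm_ge0.
have [/dotv_eq0 ->|w0] := eqVneq (dotv w w) 0.
  by rewrite dotv0r mulr_ge0 // enorm_ge0.
have a_gt0 : 0 < enorm u by rewrite sqrtr_gt0 lt_def u0 dotv_ge0.
have b_gt0 : 0 < enorm w by rewrite sqrtr_gt0 lt_def w0 dotv_ge0.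
have := dotv_ge0 (enorm w *: u - enorm u *: w).
rewrite !(dotvBl, dotvBr, dotvZl, dotvZr) -!enorm_sqr (dotvC w u).
set a := enorm u; set b := enorm w; set c := dotv u w => sq_ge0.
have ab_gt0 : 0 < a * b by rewrite mulr_gt0.
rewrite -subr_ge0 -(pmulr_rge0 _ ab_gt0) -(pmulrn_lge0 _ (ltn0Sn 1)).
by move: sq_ge0; congr (_ <= _); ring.
Qed.

Lemma norm_dotv_le u w : `|dotv u w| <= enorm u * enorm w.
Proof.
rewrite ler_norml cauchy_schwarz andbT lerNl -dotvNl -(enormN u).
exact: cauchy_schwarz.
Qed.

Lemma enorm_le_sqrt u v (c : R) :
  0 <= c -> dotv u u <= c * dotv v v -> enorm u <= Num.sqrt c * enorm v.
Proof.
by move=> c_ge0 uv; rewrite /enorm -sqrtrM // ler_sqrt // mulr_ge0 ?dotv_ge0.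
Qed.

Lemma quadratic_slope_le0 (A B : R) :
  0 <= B -> (forall t, 0 <= t <= 1 -> (t + t) * A <= t ^+ 2 * B) -> A <= 0.
Proof.
move=> B_ge0 min0; rewrite leNgt; apply/negP => A_gt0.
have AB_gt0 : 0 < A + B by exact: ltr_wpDr.
pose t := A / (A + B).
have t_gt0 : 0 < t by exact: divr_gt0.
have t_le1 : t <= 1 by rewrite ler_pdivrMr // mul1r lerDl.
have tB_le : t * B <= A.
  by rewrite mulrAC ler_pdivrMr // mulrDr lerDr mulr_ge0 // ltW.
have := min0 t; rewrite (ltW t_gt0) t_le1 expr2 => /(_ isT) tmin.
have : t * (A + A) <= t * (t * B) by move: tmin; rewrite mulrA; lra.
by rewrite ler_pM2l //; lra.
Qed.

Lemma is_proj_dotv_le0 (C : set 'rV[R]_n) v p q :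
  is_proj C v p -> (forall t, 0 <= t <= 1 -> C (p + t *: (q - p))) ->
  dotv (v - p) (q - p) <= 0.
Proof.
move=> [_ p_min] segC.
apply: (quadratic_slope_le0 (dotv_ge0 (q - p))) => t t01.
have := p_min _ (segC t t01).
rewrite /enorm ler_sqrt ?dotv_ge0 // opprD addrA dotv_sqrB; lra.
Qed.

Lemma prox_gap_le (g p d : 'rV[R]_n) (tau S1 S2 : R) : 0 < tau ->
  dotv g d + S1 + tau / 2 * dotv g g <= dotv p d + S2 + tau / 2 * dotv p p ->
  dotv (- (tau^-1 *: d) - p) (g - p) <= 0 ->
  tau / 2 * dotv (g - p) (g - p) <= S2 - S1.
Proof.
move=> tau_gt0 value_le obtuse.
have {}obtuse : dotv p d - dotv g d <= tau * (dotv g p - dotv p p).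
  move: obtuse; rewrite !(dotvBl, dotvBr, dotvNl, dotvZl) (dotvC d g) (dotvC d p).
  rewrite -(pmulr_rle0 _ tau_gt0) !(mulrDr, mulrN, mulrA) mulfV ?gt_eqF // !mul1r.
  rewrite (dotvC p g); lra.
rewrite !(dotvBl, dotvBr) (dotvC p g).
have -> : tau / 2 * (dotv g g - dotv g p - (dotv g p - dotv p p)) =
  tau / 2 * dotv g g - tau / 2 * dotv p p - tau * (dotv g p - dotv p p) by field.
lra.
Qed.

End Euclid.

Section Descent.
Variables (R : realType) (n : nat) (f : 'rV[R]_n -> R).

Definition lin_err (x y : 'rV[R]_n) : R := f x - f y - dotv (grad f y) (x - y).

Lemma diff_dotv (z d : 'rV[R]_n) : 'd f z d = dotv (grad f z) d.
Proof.
rewrite {1}(row_sum_delta d) linear_sum /dotv; apply: eq_bigr => i _.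
by rewrite linearZ /= mxE mulrC.
Qed.

Hypothesis f_diff : forall z, differentiable f z.

Lemma is_derive_line (y d : 'rV[R]_n) (t : R) :
  is_derive t 1 (fun s : R => f (s *: d + y)) (dotv (grad f (t *: d + y)) d).
Proof.
have quotE : (fun h : R => h^-1 *: (((fun s => f (s *: d + y)) \o shift t) (h *: 1)
                                    - f (t *: d + y)))
           = (fun h : R => h^-1 *: ((f \o shift (t *: d + y)) (h *: d) - f (t *: d + y))).
  apply/funext => h /=; congr (_ *: (f _ - _)).
  by rewrite /shift /= scalerDl addrA -[h *: 1]/(h * 1) mulr1.
have der : derivable (fun s : R => f (s *: d + y)) t 1.
  by rewrite /derivable quotE; exact: diff_derivable.
apply: DeriveDef => //.
by rewrite /derive quotE -/(derive f (t *: d + y) d) deriveE // diff_dotv.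
Qed.

(* Mean value theorem for [s |-> f (s d + y) - c s^2] on [[0, 1]]. *)
Lemma mvt_line (y d : 'rV[R]_n) (c : R) :
  exists2 t, 0 <= t <= 1 &
    f (d + y) - f y - c = dotv (grad f (t *: d + y)) d - c * (t + t).
Proof.
pose psi : R -> R := (fun s : R => f (s *: d + y)) - c \*: ((id : R -> R) * id).
have psi' (t : R) : is_derive t (1 : R) psi (dotv (grad f (t *: d + y)) d - c * (t + t)).
  have sq' : is_derive t (1 : R) (c \*: ((id : R -> R) * id)) (c *: (t *: 1 + t *: 1)).
    by apply: is_deriveZ; apply: is_deriveM.
  apply: (is_derive_eq (is_deriveB (is_derive_line y d t) sq')).
  by rewrite /GRing.scale /= !mulr1.
have psi_cont : {within `[0, 1], continuous psi}.
  apply: derivable_within_continuous => t _.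
  exact: (@ex_derive _ _ _ _ _ _ _ (psi' t)).
have [t t01 psiE] := MVT_segment ler01 (fun t _ => psi' t) psi_cont.
exists t; first by move: t01; rewrite in_itv.
rewrite -[RHS]mulr1 -[1 in RHS]subr0 -psiE /psi !fctE /= scale1r scale0r add0r.
rewrite mulr1 mul0r scaler0 subr0.
by rewrite -[c%:A]/(c * 1) mulr1 addrAC.
Qed.

Lemma descent_lemma (K : R) (x y : 'rV[R]_n) : lipschitz_e (grad f) K ->
  `|lin_err x y| <= K / 2 * dotv (x - y) (x - y).
Proof.
move=> gradK; set d := x - y.
have xE : x = d + y by rewrite subrK.
have slope_le t : 0 <= t ->
    `|dotv (grad f (t *: d + y)) d - dotv (grad f y) d| <= K * t * dotv d d.
  move=> t_ge0; rewrite -dotvBl; apply: le_trans (norm_dotv_le _ _) _.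
  have := gradK (t *: d + y) y; rewrite addrK enormZ ger0_norm // => gradK_t.
  apply: le_trans (ler_wpM2r (enorm_ge0 _) gradK_t) _.
  by rewrite -enorm_sqr expr2 !mulrA.
have twice_c t : K / 2 * dotv d d * (t + t) = K * t * dotv d d by field.
rewrite /lin_err -/d xE ler_norml; apply/andP; split.
- have [t /andP[t_ge0 _] tE] := mvt_line y d (- (K / 2 * dotv d d)).
  have := slope_le t t_ge0; rewrite ler_norml => /andP[slope _].
  rewrite mulNr twice_c in tE.
  rewrite -[f _ - f _](subrK (- (K / 2 * dotv d d))) tE addrAC lerDr.
  by rewrite opprK addrAC -[X in _ + X]opprK subr_ge0.
- have [t /andP[t_ge0 _] tE] := mvt_line y d (K / 2 * dotv d d).
  have := slope_le t t_ge0; rewrite ler_norml => /andP[_ slope].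
  rewrite twice_c in tE.
  rewrite -[f _ - f _](subrK (K / 2 * dotv d d)) tE addrAC gerDr.
  by rewrite addrAC subr_le0.
Qed.

End Descent.

Section Simplex.
Variables (R : realType) (m : nat).
Implicit Types a b nu : 'rV[R]_m.

Lemma simplex_segment a b (t : R) : simplex a -> simplex b -> 0 <= t <= 1 ->
  simplex (a + t *: (b - a)).
Proof.
move=> [a_ge0 a_sum] [b_ge0 b_sum] /andP[t_ge0 t_le1]; split.
  move=> j; rewrite !mxE.
  have -> : a 0 j + t * (b 0 j - a 0 j) = (1 - t) * a 0 j + t * b 0 j by ring.
  by rewrite addr_ge0 ?mulr_ge0 ?subr_ge0.
under eq_bigr => j _ do rewrite !mxE.
by rewrite big_split /= -mulr_sumr sumrB a_sum b_sum subrr mulr0 addr0.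
Qed.

Lemma simplex_avg_le nu (e : 'I_m -> R) (K : R) :
  simplex nu -> (forall j, `|e j| <= K) -> `|\sum_(j < m) nu 0 j * e j| <= K.
Proof.
move=> [nu_ge0 nu_sum] e_le; apply: le_trans (ler_norm_sum _ _ _) _.
rewrite -[K]mul1r -nu_sum mulr_suml; apply: ler_sum => j _.
by rewrite normrM ger0_norm // ler_wpM2l.
Qed.

End Simplex.

Section Problem.
Variables (R : realType) (m n : nat) (f : 'I_m -> 'rV[R]_n -> R) (y : 'rV[R]_n).

Lemma DFmul_segment (a b : 'rV[R]_m) (t : R) :
  DFmul f y (a + t *: (b - a)) = DFmul f y a + t *: (DFmul f y b - DFmul f y a).
Proof.
rewrite /DFmul -sumrB scaler_sumr -big_split /=; apply: eq_bigr => j _.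
by rewrite !mxE scalerDl -scalerA scalerBl.
Qed.

Lemma Cset_segment (p q : 'rV[R]_n) (t : R) :
  Cset f y p -> Cset f y q -> 0 <= t <= 1 -> Cset f y (p + t *: (q - p)).
Proof.
move=> [a a_simplex ->] [b b_simplex ->] t01.
by exists (a + t *: (b - a)); [exact: simplex_segment | rewrite -DFmul_segment].
Qed.

Lemma obj_decomp (tau : R) (x : 'rV[R]_n) (nu : 'rV[R]_m) :
  obj f tau x y nu = dotv (DFmul f y nu) (x - y)
    + \sum_(j < m) nu 0 j * lin_err (f j) x y
    + tau / 2 * dotv (DFmul f y nu) (DFmul f y nu).
Proof.
rewrite /obj enorm_sqr; congr (_ + _).
rewrite /DFmul dotv_suml -big_split /dotv; apply: eq_bigr => j _.
by rewrite !mxE -/(dotv _ _) dotvZl /lin_err /= -mulrDr addrCA subrr addr0.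
Qed.

End Problem.

Theorem mainTheorem3 (R : realType) (m n : nat)
  (f : 'I_m -> 'rV[R]_n -> R) (Lj : 'I_m -> R)
  (hC1 : forall j, C1 (f j))
  (hLip : forall j, lipschitz_e (grad (f j)) (Lj j))
  (tau : R) (htau : 0 < tau) (x y : 'rV[R]_n) (lam : 'rV[R]_m)
  (hlam : is_argmin_simplex (obj f tau x y) lam)
  (p : 'rV[R]_n) (hp : is_proj (Cset f y) (tau^-1 *: (y - x)) p) :
  let L := \big[Num.max/0]_(j < m) Lj j in
  enorm (DFmul f y lam - p) <= Num.sqrt (2 * L / tau) * enorm (x - y).
Proof.
cbv zeta; set L := \big[Num.max/0]_(j < m) Lj j.
set d := x - y; set g := DFmul f y lam.
have lipL j : lipschitz_e (grad (f j)) L.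
  move=> a b; apply: le_trans (hLip j a b) _.
  by rewrite ler_wpM2r ?enorm_ge0 // le_bigmax.
have err_le j : `|lin_err (f j) x y| <= L / 2 * dotv d d.
  by have := descent_lemma (proj1 (hC1 j)) x y (lipL j).
have [[mu mu_simplex pE] _] := hp.
have [lam_simplex lam_min] := hlam.
have obtuse : dotv (- (tau^-1 *: d) - p) (g - p) <= 0.
  rewrite -scalerN opprB; apply: is_proj_dotv_le0 hp _ => t t01.
  by apply: Cset_segment => //; [exists mu | exists lam].
have muE : DFmul f y mu = p by rewrite pE.
have := lam_min mu mu_simplex; rewrite !obj_decomp muE => value_le.
have := simplex_avg_le mu_simplex err_le; rewrite ler_norml => /andP[_ mu_hi].
have := simplex_avg_le lam_simplex err_le; rewrite ler_norml => /andP[lam_lo _].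
have gap := le_trans (prox_gap_le htau value_le obtuse) (lerB mu_hi lam_lo).
have L_ge0 : 0 <= L by exact: bigmax_ge_id.
apply: enorm_le_sqrt; first by rewrite divr_ge0 ?mulr_ge0 // ltW.
rewrite -(@ler_pM2l _ (tau / 2)) ?divr_gt0 //; apply: le_trans gap _.
rewrite (_ : tau / 2 * _ = L / 2 * dotv d d - - (L / 2 * dotv d d)) //.
by field; rewrite gt_eqF.
Qed.
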